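(* Let $FQ_n$ be the free quandle on $\{x_1,\dots,x_n\}$, $T_n=\{y_1,\dots,y_n\}$ the trivial quandle, and $\beta\in VB_n$ a virtual braid. Then $$\widetilde Q(\hat\beta)=\Bigl\langle x_1,\dots,x_n,y_1,\dots,y_n\ \Bigm|\ \varphi_{2Q}(\beta)(x_i)=x_i,\ \varphi_{2Q}(\beta)(y_i)=y_i\ (i=1,\dots,n),\ y_r*y_s=y_r\ (r,s=1,\dots,n)\Bigr\rangle$$ (a quandle presentation), where $\varphi_{2Q}:VB_n\to\mathrm{Aut}(FQ_n*T_n)$ is the homomorphism given in the context.
   Context: A quandle is a set with a binary operation $*$ such that $a*a=a$; each map $b\mapsto b*a$ is a bijection (write $a*^{-1}b$ for the preimage of $a$ under $x\mapsto x*b$); and $(a*b)*c=(a*c)*(b*c)$. The trivial quandle has $a*b=a$; $FQ_n*T_n$ is the free product of quandles. $VB_n$ is the group generated by $\sigma_1,\dots,\sigma_{n-1},\rho_1,\dots,\rho_{n-1}$ with relations $\sigma_i\sigma_{i+1}\sigma_i=\sigma_{i+1}\sigma_i\sigma_{i+1}$, $\rho_i\rho_{i+1}\rho_i=\rho_{i+1}\rho_i\rho_{i+1}$, $\rho_{i+1}\sigma_i\rho_{i+1}=\rho_i\sigma_{i+1}\rho_i$ ($1\le i\le n-2$), $\sigma_i\sigma_j=\sigma_j\sigma_i$, $\rho_i\rho_j=\rho_j\rho_i$, $\sigma_i\rho_j=\rho_j\sigma_i$ ($|i-j|\ge 2$), $\rho_i^2=1$. The representation $\varphi_{2Q}$ is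 defined by: $\varphi_{2Q}(\sigma_i)$: $x_i\mapsto x_{i+1}$, $x_{i+1}\mapsto x_i*x_{i+1}$, $y_i\mapsto y_{i+1}$, $y_{i+1}\mapsto y_i$; $\varphi_{2Q}(\rho_i)$: $x_i\mapsto x_{i+1}*^{-1}y_i$, $x_{i+1}\mapsto x_i*y_{i+1}$, $y_i\mapsto y_{i+1}$, $y_{i+1}\mapsto y_i$; all other generators fixed; with the convention $\varphi_{2Q}(\beta_1\cdots\beta_k)=\varphi_{2Q}(\beta_k)\cdots\varphi_{2Q}(\beta_1)$. In a braid diagram drawn top to bottom, $\sigma_i$ is a positive crossing, $\sigma_i^{-1}$ a negative crossing and $\rho_i$ a virtual crossing between strands $i,i+1$; $\hat\beta$ is the closure of $\beta$, a virtual link diagram. Definition of $\widetilde Q(L)$ for a virtual link $L$ given by a diagram $D$ with $n$ arcs (an arc being a strand from one crossing, classical or virtual, to the next): label arcs by $(x_k,y_k)$; at each crossing with both strands oriented downward, with upper (incoming) labels $(x_i,y_i),(x_j,y_j)$ left to right and lower (outgoing) labels $(x_p,y_p),(x_q,y_q)$ left to right, impose: positive crossing $x_p=x_j$, $x_q=x_i*x_j$, $y_p=y_j$, $y_q=y_i$; negative crossing $x_p=x_j*^{-1}x_i$, $x_q=x_i$, $y_p=y_j$, $y_q=y_i$; virtual crossing $x_p=x_j*^{-1}y_i$, $x_q=x_i*y_j$, $y_p=y_j$, $y_q=y_i$. $\widetilde Q(L)$ is the quotient of $FQ_n*T_n$ by these relations (well defined up to isomorphism). *)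

From mathcomp Require Import all_boot.
From Stdlib Require List.
Set Implicit Arguments. Unset Strict Implicit. Unset Printing Implicit Defensive.

(** Terms over generators [G] in the signature of quandles:
    [Op a b] is a * b and [OpInv a b] is a *^{-1} b. *)
Inductive qterm (G : Type) : Type :=
| Gen of G
| Op of qterm G & qterm G
| OpInv of qterm G & qterm G.
Arguments Gen {G}. Arguments Op {G}. Arguments OpInv {G}.

(** Equality in the quandle presented by generators [G] and relations [R]:
    the least congruence containing [R] and the quandle axioms
    a*a = a, (a *^{-1} b) * b = a, (a * b) *^{-1} b = a,
    (a*b)*c = (a*c)*(b*c).  With [R] empty this is the free quandle on [G]. *)
Inductive qeq (G : Type) (R : qterm G -> qterm G -> Prop) :
  qterm G -> qterm G -> Prop :=
| qeq_rel a b : R a b -> qeq R a b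
| qeq_refl a : qeq R a a
| qeq_sym a b : qeq R a b -> qeq R b a
| qeq_trans a b c : qeq R a b -> qeq R b c -> qeq R a c
| qeq_Op a a' b b' : qeq R a a' -> qeq R b b' -> qeq R (Op a b) (Op a' b')
| qeq_OpInv a a' b b' :
    qeq R a a' -> qeq R b b' -> qeq R (OpInv a b) (OpInv a' b')
| qeq_idem a : qeq R (Op a a) a
| qeq_invl a b : qeq R (Op (OpInv a b) b) a
| qeq_invr a b : qeq R (OpInv (Op a b) b) a
| qeq_dist a b c : qeq R (Op (Op a b) c) (Op (Op a c) (Op b c)).

(** The presented quandles <G1 | R1> and <G2 | R2> are isomorphic:
    maps on representatives that descend to mutually inverse maps on the
    quotients, the first one preserving the operation. *)
Definition qpres_iso (G1 G2 : Type)
  (R1 : qterm G1 -> qterm G1 -> Prop) (R2 : qterm G2 -> qterm G2 -> Prop) :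
  Prop :=
  exists (f : qterm G1 -> qterm G2) (g : qterm G2 -> qterm G1),
    [/\ (forall a b, qeq R1 a b -> qeq R2 (f a) (f b)),
        (forall a b, qeq R2 a b -> qeq R1 (g a) (g b)),
        (forall a, qeq R1 (g (f a)) a),
        (forall b, qeq R2 (f (g b)) b) &
        (forall a b, qeq R2 (f (Op a b)) (Op (f a) (f b)))].

Fixpoint qsubst (G H : Type) (s : G -> qterm H) (t : qterm G) : qterm H :=
  match t with
  | Gen g => s g
  | Op a b => Op (qsubst s a) (qsubst s b)
  | OpInv a b => OpInv (qsubst s a) (qsubst s b)
  end.

(** Generators of FQ * T : x-generators and y-generators indexed by [A]. *)
Inductive xy (A : Type) : Type := xg of A | yg of A.
Arguments xg {A}. Arguments yg {A}.

(** Relations y_r * y_s = y_r making the y's a trivial quandle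
    (the presentation of FQ_A * T_A is <x_a, y_a | these>). *)
Definition triv_rel (A : Type) (u v : qterm (xy A)) : Prop :=
  exists r s : A, u = Op (Gen (yg r)) (Gen (yg s)) /\ v = Gen (yg r).

(** Letters: sigma_i (Pos), sigma_i^{-1} (Neg), rho_i (Virt), for
    i : 'I_n.-1 (0-indexed: the letter acts on positions i and i+1 of 'I_n). *)
Inductive kind := Pos | Neg | Virt.
Definition letter (n : nat) := (kind * 'I_n.-1)%type.

Lemma pos_r_subproof n (i : 'I_n.-1) : i.+1 < n.
Proof. by case: n i => [|n] [i Hi]. Qed.

Lemma pos_l_subproof n (i : 'I_n.-1) : i < n.
Proof. exact: ltnW (pos_r_subproof i). Qed.

Definition pos_l n (i : 'I_n.-1) : 'I_n := Ordinal (pos_l_subproof i).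
Definition pos_r n (i : 'I_n.-1) : 'I_n := Ordinal (pos_r_subproof i).

Definition phi_letter n (l : letter n) (v : xy 'I_n) : qterm (xy 'I_n) :=
  let: (kd, i) := l in
  let L := pos_l i in let Rr := pos_r i in
  let X j := Gen (xg j) in let Y j := Gen (yg j) in
  match v with
  | xg j =>
      if j == L then
        match kd with
        | Pos => X Rr
        | Neg => OpInv (X Rr) (X L)
        | Virt => OpInv (X Rr) (Y L)
        end
      else if j == Rr then
        match kd with
        | Pos => Op (X L) (X Rr)
        | Neg => X L
        | Virt => Op (X L) (Y Rr)
        end
      else X j
  | yg j => if j == L then Y Rr else if j == Rr then Y L else Y j
  end.

(** phi_{2Q}(b_1 ... b_k)(v), with the paper's convention
    phi(b_1...b_k) = phi(b_k)...phi(b_1) read as composition of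
    automorphisms acting on the right, i.e. functionally
    phi(b_1) o ... o phi(b_k)  (so phi(beta)(x_i) is the label of the
    i-th bottom end of the diagram in terms of the top labels). *)
Definition phi_word n (w : seq (letter n)) (v : xy 'I_n) : qterm (xy 'I_n) :=
  foldr (fun l t => qsubst (phi_letter l) t) (Gen v) w.

Definition braid_rel n (w : seq (letter n)) (u v : qterm (xy 'I_n)) : Prop :=
  (exists i : 'I_n, u = phi_word w (xg i) /\ v = Gen (xg i)) \/
  (exists i : 'I_n, u = phi_word w (yg i) /\ v = Gen (yg i)) \/
  triv_rel u v.

(** Crossing number t (t-th letter, counted from the top). *)
Definition crossing n (w : seq (letter n)) (t : 'I_(size w)) : letter n :=
  tnth (in_tuple w) t.
Arguments crossing {n} w t.

Definition touches n (l : letter n) (p : 'I_n) : bool :=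
  (p == pos_l l.2) || (p == pos_r l.2).

Definition untouched n (w : seq (letter n)) (p : 'I_n) : bool :=
  all (fun l => ~~ touches l p) w.

(** Arcs of the closure of w: every arc starts at exactly one outgoing
    end of a crossing (t, false = left / true = right); in addition each
    position never touched by a crossing gives a closed component with no
    crossing, which is a single arc. *)
Definition arc n (w : seq (letter n)) :=
  (('I_(size w) * bool) + {p : 'I_n | untouched w p})%type.
Arguments arc : clear implicits.

Definition out_arc n (w : seq (letter n)) (t : 'I_(size w)) (p : 'I_n) :
  arc n w := inl (t, p == pos_r (crossing w t).2).
Arguments out_arc {n} w t p.

(** Incoming arc of crossing t at position p: the arc that left the last
    crossing above t touching p, or (going around the closure) the last
    crossing of the whole word touching p. *)
Definition in_arc n (w : seq (letter n)) (t : 'I_(size w)) (p : 'I_n) :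
  arc n w :=
  let before : seq 'I_(size w) :=
    [seq s : 'I_(size w) <- enum 'I_(size w) | (s < t) && touches (crossing w s) p] in
  let all_s : seq 'I_(size w) := [seq s : 'I_(size w) <- enum 'I_(size w) | touches (crossing w s) p] in
  match rev before, rev all_s with
  | s :: _, _ => out_arc w s p
  | [::], s :: _ => out_arc w s p
  | [::], [::] => out_arc w t p (* unreachable: t touches p *)
  end.
Arguments in_arc {n} w t p.

Definition crossing_rels n (w : seq (letter n)) (t : 'I_(size w)) :
  list (qterm (xy (arc n w)) * qterm (xy (arc n w))) :=
  let: (kd, i) := crossing w t in
  let a : arc n w := in_arc w t (pos_l i) in   (* upper left  (x_i, y_i) *)
  let b : arc n w := in_arc w t (pos_r i) in   (* upper right (x_j, y_j) *)
  let p : arc n w := inl (t, false) in         (* lower left  (x_p, y_p) *)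
  let q : arc n w := inl (t, true) in          (* lower right (x_q, y_q) *)
  let X c := Gen (xg c) in let Y c := Gen (yg c) in
  match kd with
  | Pos => [:: (X p, X b); (X q, Op (X a) (X b)); (Y p, Y b); (Y q, Y a)]
  | Neg => [:: (X p, OpInv (X b) (X a)); (X q, X a); (Y p, Y b); (Y q, Y a)]
  | Virt => [:: (X p, OpInv (X b) (Y a)); (X q, Op (X a) (Y b));
               (Y p, Y b); (Y q, Y a)]
  end.
Arguments crossing_rels {n} w t.

(** Relations defining Qtilde(closure of w) as a quotient of
    FQ_arcs * T_arcs. *)
Definition closure_rel n (w : seq (letter n)) (u v : qterm (xy (arc n w))) :
  Prop :=
  triv_rel u v \/ exists t : 'I_(size w), List.In (u, v) (crossing_rels w t).
Arguments closure_rel {n} w u v.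
Arguments braid_rel {n} w u v.

From Pilot Require Import Defs.
From mathcomp Require Import all_boot.
Set Implicit Arguments. Unset Strict Implicit.

(* Push the top labels x_p, y_p down the braid: below the first k crossings the
   strand at position p carries phi_{2Q}(first k letters)(x_p).  Sending each arc
   of the closure to the label of the level where it starts, the crossing
   relations of Qtilde become the one-step recursion of these labels, and going
   around the closure identifies the bottom labels phi_{2Q}(beta)(x_p) with the
   top ones, which is the braid relation.  Conversely x_p, y_p go to the arcs
   crossing the top of the diagram; an induction down the crossings shows that
   the two maps are mutually inverse. *)

Lemma qsubst_comp (A B C : Type) (s : A -> qterm B) (s' : B -> qterm C) t :
  qsubst s' (qsubst s t) = qsubst (fun a => qsubst s' (s a)) t.
Proof. by elim: t => //= a -> b ->. Qed.

Lemma qsubst_Gen (A : Type) (t : qterm A) : qsubst Gen t = t.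
Proof. by elim: t => //= a -> b ->. Qed.

Lemma qsubst_congr (A B : Type) (R : qterm B -> qterm B -> Prop)
    (s s' : A -> qterm B) t :
  (forall a, qeq R (s a) (s' a)) -> qeq R (qsubst s t) (qsubst s' t).
Proof. by move=> ss'; elim: t => //= a Ha b Hb; [apply: qeq_Op | apply: qeq_OpInv]. Qed.

Lemma qeq_qsubst (A B : Type) (R1 : qterm A -> qterm A -> Prop)
    (R2 : qterm B -> qterm B -> Prop) (s : A -> qterm B) :
  (forall u v, R1 u v -> qeq R2 (qsubst s u) (qsubst s v)) ->
  forall a b, qeq R1 a b -> qeq R2 (qsubst s a) (qsubst s b).
Proof.
move=> sR a b; elim=> {a b} /=.
- exact: sR.
- by move=> a; apply: qeq_refl.
- by move=> a b _; apply: qeq_sym.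
- by move=> a b c _ ab _; apply: qeq_trans.
- by move=> a a' b b' _ aa' _ bb'; apply: qeq_Op.
- by move=> a a' b b' _ aa' _ bb'; apply: qeq_OpInv.
- by move=> a; apply: qeq_idem.
- by move=> a b; apply: qeq_invl.
- by move=> a b; apply: qeq_invr.
- by move=> a b c; apply: qeq_dist.
Qed.

Lemma qsubstK (A B : Type) (R : qterm A -> qterm A -> Prop)
    (f : A -> qterm B) (g : B -> qterm A) :
  (forall a, qeq R (qsubst g (f a)) (Gen a)) ->
  forall t, qeq R (qsubst g (qsubst f t)) t.
Proof.
by move=> fK t; rewrite qsubst_comp -[X in qeq _ _ X]qsubst_Gen; apply: qsubst_congr.
Qed.

Definition xy_index (A : Type) (v : xy A) : A := let: (xg a | yg a) := v in a.

Definition xy_map (A B : Type) (f : A -> B) (v : xy A) : xy B :=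
  match v with xg a => xg (f a) | yg a => yg (f a) end.

Lemma xy_index_map (A B : Type) (f : A -> B) v : xy_index (xy_map f v) = f (xy_index v).
Proof. by case: v. Qed.

Lemma xy_map_comp (A B C : Type) (f : B -> C) (h : A -> B) v :
  xy_map f (xy_map h v) = xy_map (f \o h) v.
Proof. by case: v. Qed.

Lemma xy_map_id_on (A : Type) (f : A -> A) v :
  f (xy_index v) = xy_index v -> xy_map f v = v.
Proof. by case: v => a /= ->. Qed.

Lemma eq_xy_map (A B : Type) (f h : A -> B) v :
  f (xy_index v) = h (xy_index v) -> xy_map f v = xy_map h v.
Proof. by case: v => a /= ->. Qed.

Definition last_ord m (P : pred 'I_m) : option 'I_m := ohead (rev (filter P (enum 'I_m))).

Variant last_ord_spec m (P : pred 'I_m) : option 'I_m -> Type :=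
| LastOrdSome s of P s & (forall s', P s' -> s' <= s) : last_ord_spec P (Some s)
| LastOrdNone of (forall s, ~~ P s) : last_ord_spec P None.

Lemma last_ordP m (P : pred 'I_m) : last_ord_spec P (last_ord P).
Proof.
rewrite /last_ord; case E: (rev _) => [|s l] /=.
  constructor=> s; apply/negP=> Ps.
  by have := mem_rev (filter P (enum 'I_m)) s; rewrite E mem_filter Ps mem_enum.
have sorted_enum : sorted (relpre val ltn) (enum 'I_m).
  by rewrite -sorted_map val_enum_ord iota_ltn_sorted.
have := sorted_filter (fun a b c => @ltn_trans (val a) (val b) (val c)) P sorted_enum.
rewrite -(revK (filter _ _)) rev_sorted E /= path_sortedE; last first.
  by move=> a b c /= ab bc; apply: ltn_trans bc ab.
case/andP=> /allP s_max _.
have mem_sl s' : (s' \in s :: l) = P s' by rewrite -E mem_rev mem_filter mem_enum andbT.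
constructor=> [|s']; first by rewrite -mem_sl mem_head.
rewrite -mem_sl inE => /orP[/eqP -> // | s'l].
exact/ltnW/s_max.
Qed.

Lemma phi_word_rcons n (u : seq (letter n)) l g :
  phi_word (rcons u l) g = qsubst (phi_word u) (phi_letter l g).
Proof. by elim: u => [|a u IHu] /=; rewrite ?qsubst_Gen // IHu qsubst_comp. Qed.

Lemma phi_word_yg n (u : seq (letter n)) p : exists q, phi_word u (yg p) = Gen (yg q).
Proof.
elim: u => [|[kd i] u [q IHu]] /=; first by exists p.
by rewrite -/(phi_word u _) IHu /=; case: ifP => _; [|case: ifP => _]; eexists.
Qed.

Lemma braid_rel_phi_word n (w : seq (letter n)) g : braid_rel w (phi_word w g) (Gen g).
Proof. by case: g => p; [left | right; left]; exists p. Qed.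

Lemma phi_letter_untouched n (l : letter n) g :
  ~~ touches l (xy_index g) -> phi_letter l g = Gen g.
Proof.
case: l => kd i; rewrite /touches negb_or => /andP[/negbTE pl /negbTE pr].
by case: g pl pr => p /= -> ->.
Qed.

Lemma pos_r_neq_l n (i : 'I_n.-1) : (pos_r i == pos_l i) = false.
Proof. by apply/negbTE; rewrite -val_eqE /= eqn_leq ltnn. Qed.

Section Closure.
Variables (n : nat) (w : seq (letter n)).
Local Notation N := (size w).
Local Notation arcs := (Defs.arc n w).

Definition label k (g : xy 'I_n) : qterm (xy 'I_n) := phi_word (take k w) g.

Lemma label0 g : label 0 g = Gen g.
Proof. by rewrite /label take0. Qed.

Lemma labelN g : label N g = phi_word w g.
Proof. by rewrite /label take_size. Qed.

Lemma label_step (t : 'I_N) g :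
  label t.+1 g = qsubst (label t) (phi_letter (crossing w t) g).
Proof.
rewrite /label (take_nth (crossing w t)) // phi_word_rcons.
by congr (qsubst _ (phi_letter _ g)); exact: esym (tnth_nth _ (in_tuple w) t).
Qed.

Lemma label_stable j1 j2 g : j1 <= j2 <= N ->
    (forall s : 'I_N, j1 <= s < j2 -> ~~ touches (crossing w s) (xy_index g)) ->
  label j2 g = label j1 g.
Proof.
elim: j2 => [|j IHj]; first by rewrite leqn0 => /andP[/eqP ->].
case/andP; rewrite leq_eqVlt => /orP[/eqP -> // | j1j jN] untouched_j.
rewrite (label_step (Ordinal jN)) phi_letter_untouched; last first.
  by apply: untouched_j; rewrite /= ltnSn andbT -ltnS.
rewrite /= IHj; [by [] | by rewrite -ltnS j1j ltnW | move=> s /andP[j1s sj]].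
by apply: untouched_j; rewrite j1s ltnW.
Qed.

Definition last_touch k p : option 'I_N :=
  last_ord (fun s : 'I_N => (s < k) && touches (crossing w s) p).

Variant last_touch_spec (k : nat) (p : 'I_n) : option 'I_N -> Type :=
| LastTouch (s : 'I_N) of s < k & touches (crossing w s) p
    & (forall s' : 'I_N, s < s' < k -> ~~ touches (crossing w s') p) :
    last_touch_spec k p (Some s)
| NoTouch of (forall s' : 'I_N, s' < k -> ~~ touches (crossing w s') p) :
    last_touch_spec k p None.

Lemma last_touchP k p : last_touch_spec k p (last_touch k p).
Proof.
rewrite /last_touch; case: last_ordP => [s /andP[sk touch_s] s_max | untouched_k].
  constructor=> // s' /andP[ss' s'k]; apply/negP=> touch_s'.
  by have := s_max s'; rewrite s'k touch_s' leqNgt ss' => /(_ isT).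
by constructor=> s' s'k; have := untouched_k s'; rewrite s'k.
Qed.

Lemma last_touchN p :
  last_touch N p = last_ord (fun s : 'I_N => touches (crossing w s) p).
Proof.
by rewrite /last_touch /last_ord; congr (ohead (rev _)); apply: eq_filter => s; rewrite ltn_ord.
Qed.

Lemma untouchedP p :
  reflect (forall s : 'I_N, ~~ touches (crossing w s) p) (untouched w p).
Proof. exact: (@all_tnthP _ _ _ (in_tuple w)). Qed.

Lemma last_touch_dec p : {s | last_touch N p = Some s} + {untouched w p}.
Proof.
rewrite last_touchN; case: last_ordP => [s _ _ | untouched_p]; first by left; exists s.
by right; apply/untouchedP.
Qed.

(* The arc crossing the top of the diagram at position p: by the closure it is
   the arc leaving the last crossing on that strand, if there is one. *)
Definition top_arc p : arcs :=
  match last_touch_dec p with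
  | inleft (exist s _) => out_arc w s p
  | inright untouched_p => inr (exist _ p untouched_p)
  end.

Lemma last_touch_untouched k p : untouched w p -> last_touch k p = None.
Proof.
move/untouchedP=> untouched_p; rewrite /last_touch.
by case: last_ordP => // s /andP[_ touch_s]; have := untouched_p s; rewrite touch_s.
Qed.

Lemma top_arc_last p s : last_touch N p = Some s -> top_arc p = out_arc w s p.
Proof.
rewrite /top_arc; case: last_touch_dec => [[s' ->] [->] // | untouched_p].
by rewrite last_touch_untouched.
Qed.

Lemma top_arc_untouched p (untouched_p : untouched w p) :
  top_arc p = inr (exist _ p untouched_p).
Proof.
rewrite /top_arc; case: last_touch_dec => [[s] | untouched_p'].
  by rewrite last_touch_untouched.
by rewrite (bool_irrelevance untouched_p' untouched_p).
Qed.

(* The arc at position p just above crossing k (0-indexed). *)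
Definition arc_at k p : arcs :=
  if last_touch k p is Some s then out_arc w s p else top_arc p.

Definition closure_gen k (g : xy 'I_n) : qterm (xy arcs) := Gen (xy_map (arc_at k) g).

Lemma arc_at0 p : arc_at 0 p = top_arc p.
Proof. by rewrite /arc_at /last_touch; case: last_ordP. Qed.

Lemma arc_atN p : arc_at N p = top_arc p.
Proof. by rewrite /arc_at; case E: (last_touch N p) => [s|]; rewrite ?(top_arc_last E). Qed.

Lemma arc_at_untouched (t : 'I_N) p :
  ~~ touches (crossing w t) p -> arc_at t.+1 p = arc_at t p.
Proof.
move=> untouched_t; rewrite /arc_at /last_touch /last_ord.
congr (if ohead (rev _) is Some s then _ else _); apply: eq_filter => s /=.
rewrite ltnS leq_eqVlt; case: eqP => //= /val_inj ->.
by rewrite ltnn (negbTE untouched_t).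
Qed.

Lemma last_touch_crossing (t : 'I_N) p :
  touches (crossing w t) p -> last_touch t.+1 p = Some t.
Proof.
move=> touch_t; rewrite /last_touch; case: last_ordP => [s /andP[st _] s_max | ].
  by congr Some; apply/val_inj/eqP; rewrite eqn_leq -ltnS st s_max // ltnSn.
by move/(_ t); rewrite ltnSn touch_t.
Qed.

Lemma arc_at_touched (t : 'I_N) p :
  touches (crossing w t) p -> arc_at t.+1 p = out_arc w t p.
Proof. by move=> touch_t; rewrite /arc_at last_touch_crossing. Qed.

Lemma in_arc_at (t : 'I_N) p : touches (crossing w t) p -> in_arc w t p = arc_at t p.
Proof.
move=> touch_t; rewrite /in_arc /arc_at /last_touch /last_ord.
case: (rev _) => //=; case E: (rev _) => [|s l].
  have := mem_rev [seq s <- enum 'I_N | touches (crossing w s) p] t.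
  by rewrite E mem_filter touch_t mem_enum.
by rewrite (@top_arc_last p s) // last_touchN /last_ord E.
Qed.

Definition arc_pos (a : arcs) : 'I_n :=
  match a with
  | inl (t, b) => if b then pos_r (crossing w t).2 else pos_l (crossing w t).2
  | inr u => val u
  end.

Definition arc_level (a : arcs) : nat := if a is inl (t, _) then t.+1 else 0.

Lemma arc_pos_out (t : 'I_N) p : touches (crossing w t) p -> arc_pos (out_arc w t p) = p.
Proof. by case/orP=> /eqP ->; rewrite /= ?eqxx // eq_sym pos_r_neq_l. Qed.

Lemma arc_at_pos a : arc_at (arc_level a) (arc_pos a) = a.
Proof.
case: a => [[t b] | [p untouched_p]] /=; last by rewrite arc_at0 top_arc_untouched.
rewrite arc_at_touched; last by case: b; rewrite /touches eqxx ?orbT.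
by rewrite /out_arc; case: b; rewrite /= ?eqxx // eq_sym pos_r_neq_l.
Qed.

Lemma crossing_relsP (t : 'I_N) u v :
  List.In (u, v) (crossing_rels w t) <->
  exists2 g, touches (crossing w t) (xy_index g) &
    (u, v) = (closure_gen t.+1 g, qsubst (closure_gen t) (phi_letter (crossing w t) g)).
Proof.
have touch_l : touches (crossing w t) (pos_l (crossing w t).2) by rewrite /touches eqxx.
have touch_r : touches (crossing w t) (pos_r (crossing w t).2) by rewrite /touches eqxx orbT.
move: (in_arc_at touch_l) (in_arc_at touch_r) (arc_at_touched touch_l) (arc_at_touched touch_r).
rewrite /crossing_rels /closure_gen /out_arc eqxx eq_sym pos_r_neq_l.
case: (crossing w t) touch_l touch_r => kd i /= _ _ in_l in_r out_l out_r.
rewrite in_l in_r; split=> [|[g touch_g [-> ->]]].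
  case: kd => /=; (case=> [[<- <-]|[[<- <-]|[[<- <-]|[[<- <-]|[]]]]];
    [exists (xg (pos_l i)) | exists (xg (pos_r i))
    | exists (yg (pos_l i)) | exists (yg (pos_r i))]);
    by rewrite /touches /= ?eqxx ?pos_r_neq_l ?orbT ?out_l ?out_r.
case: g touch_g => p; rewrite /touches /= => /orP[] /eqP ->;
  by rewrite /= eqxx ?pos_r_neq_l ?out_l ?out_r; case: kd => /=; tauto.
Qed.

Lemma closure_gen_step (t : 'I_N) g :
  qeq (closure_rel w)
    (qsubst (closure_gen t) (phi_letter (crossing w t) g)) (closure_gen t.+1 g).
Proof.
have [touch_g | untouched_g] := boolP (touches (crossing w t) (xy_index g)).
  apply/qeq_sym/qeq_rel; right; exists t; apply/crossing_relsP; by exists g.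
rewrite phi_letter_untouched // /closure_gen (@eq_xy_map _ _ (arc_at t.+1) (arc_at t)) //.
  exact: qeq_refl.
exact: arc_at_untouched.
Qed.

Lemma closure_gen_label k g :
  k <= N -> qeq (closure_rel w) (qsubst (closure_gen 0) (label k g)) (closure_gen k g).
Proof.
elim: k g => [|k IHk] g kN; first by rewrite label0; apply: qeq_refl.
rewrite (label_step (Ordinal kN)) qsubst_comp.
apply: qeq_trans (closure_gen_step (Ordinal kN) g).
by apply: qsubst_congr => h; apply: IHk; apply: ltnW.
Qed.

Definition closure_to_braid (v : xy arcs) : qterm (xy 'I_n) :=
  label (arc_level (xy_index v)) (xy_map arc_pos v).

Lemma closure_to_braid_out (s : 'I_N) (f : 'I_n -> arcs) g :
    touches (crossing w s) (xy_index g) -> f (xy_index g) = out_arc w s (xy_index g) ->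
  closure_to_braid (xy_map f g) = label s.+1 g.
Proof.
move=> touch_s f_out; rewrite /closure_to_braid xy_index_map xy_map_comp f_out.
by rewrite xy_map_id_on //= f_out arc_pos_out.
Qed.

Lemma closure_to_braid_arc_at k g :
  k <= N -> qeq (braid_rel w) (closure_to_braid (xy_map (arc_at k) g)) (label k g).
Proof.
move=> kN; rewrite (@eq_xy_map _ _ _ (fun=> arc_at k (xy_index g))) //.
rewrite /arc_at; case: (last_touchP k (xy_index g)) => [s sk touch_s above_s | untouched_k].
  rewrite (closure_to_braid_out touch_s) // (@label_stable s.+1 k) ?sk //.
  exact: qeq_refl.
have -> : label k g = Gen g.
  by rewrite -(label0 g); apply: label_stable => // s' /andP[_]; apply: untouched_k.
have := top_arc_last (p := xy_index g).
case: last_touchP => [s _ touch_s above_s /(_ s erefl) -> | untouched_N _].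
  rewrite (closure_to_braid_out touch_s) //.
  rewrite -(@label_stable s.+1 N) ?labelN ?ltn_ord ?leqnn //.
  exact/qeq_rel/braid_rel_phi_word.
have untouched_p : untouched w (xy_index g) by apply/untouchedP => s; apply/untouched_N.
rewrite top_arc_untouched /closure_to_braid xy_index_map xy_map_comp label0 xy_map_id_on //.
exact: qeq_refl.
Qed.

Lemma arc_level_le a : arc_level a <= N.
Proof. by case: a => [[t b] | //]; apply: ltn_ord. Qed.

Lemma closure_genN g : closure_gen N g = closure_gen 0 g.
Proof. by rewrite /closure_gen; congr Gen; apply: eq_xy_map; rewrite arc_atN arc_at0. Qed.

Lemma closure_to_braid_yg a : exists q, closure_to_braid (yg a) = Gen (yg q).
Proof. exact: phi_word_yg. Qed.

Lemma closure_to_braid_rel u v : closure_rel w u v ->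
  qeq (braid_rel w) (qsubst closure_to_braid u) (qsubst closure_to_braid v).
Proof.
case=> [[r [s [-> ->]]] | [t /crossing_relsP [g _ [-> ->]]]] /=.
  have [[r' ->] [s' ->]] := (closure_to_braid_yg r, closure_to_braid_yg s).
  by apply: qeq_rel; right; right; exists r', s'.
apply: qeq_trans (closure_to_braid_arc_at g (ltn_ord t)) _.
rewrite label_step qsubst_comp; apply: qsubst_congr => h.
exact/qeq_sym/closure_to_braid_arc_at/ltnW.
Qed.

Lemma braid_to_closure_rel u v : braid_rel w u v ->
  qeq (closure_rel w) (qsubst (closure_gen 0) u) (qsubst (closure_gen 0) v).
Proof.
case=> [[p [-> ->]] | [[p [-> ->]] | [r [s [-> ->]]]]]; last first.
  by apply: qeq_rel; left; exists (arc_at 0 r), (arc_at 0 s).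
all: by rewrite /= -labelN -closure_genN; apply: closure_gen_label.
Qed.

Lemma closure_to_braidK v :
  qeq (closure_rel w) (qsubst (closure_gen 0) (closure_to_braid v)) (Gen v).
Proof.
apply: qeq_trans (closure_gen_label _ (arc_level_le _)) _.
by rewrite /closure_gen xy_map_comp xy_map_id_on; [apply: qeq_refl | apply: arc_at_pos].
Qed.

Lemma closure_genK g :
  qeq (braid_rel w) (qsubst closure_to_braid (closure_gen 0 g)) (Gen g).
Proof. by rewrite -(label0 g); apply: closure_to_braid_arc_at. Qed.

End Closure.

Theorem theorem5 (n : nat) (w : seq (letter n)) :
  qpres_iso (closure_rel w) (braid_rel w).
Proof.
exists (qsubst (@closure_to_braid n w)), (qsubst (closure_gen w 0)); split.
- exact: qeq_qsubst (@closure_to_braid_rel n w).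
- exact: qeq_qsubst (@braid_to_closure_rel n w).
- exact: qsubstK (@closure_to_braidK n w).
- exact: qsubstK (@closure_genK n w).
- by move=> a b; apply: qeq_refl.
Qed.
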